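(* In the Neutralization-Based Reclamation (NBR) scheme described in the context, no reclaimer thread ever reclaims (frees) an unsafe node; that is, no node freed by a reclaimer is subsequently accessed by any thread.
   Context: Setting: an asynchronous shared-memory system with a fixed set of threads operating on a linked concurrent data structure whose nodes are reached from a fixed set of entry points; a node that has been unlinked is retired by exactly one thread, and a node is unsafe for reclamation if some thread may still access it. NBR works as follows. Each thread has a private limbo bag of retired nodes, a thread-local atomic boolean flag restartable, and a row of a shared single-writer multi-reader array reservations (at most $r$ slots per thread). Each data structure operation consists of an optional preamble (no access to shared nodes), then one or more read phases each followed by a write phase. Immediately before a read phase the thread sets a checkpoint (via sigsetjmp); at the beginning of a read phase it clears its reservations and then stores true into restartable (sequentially consistent store); during a read phase it only reads, and only shared nodes discovered within that phase starting from an entry point. To end a read phase and enter the write phase, the thread writes pointers to all shared nodes it will access in the write phase into its reservation slots and then stores false into restartable (sequentially consistent store); in the write phase it accesses only nodes it reserved before entering the write phase, and on receipt of a signal it simply continues. On receipt of a neutralizing signal a thread runs a handler: if restartable is false it returns and continues; otherwise it jumps back (siglongjmp) to its last checkpoint, discarding all private references obtained in the read phase, and restarts the read phase from an entry point. A thread retires an unlinked node by appending it to its limbo bag; when the limbo bag exceeds a predetermined size threshold, the thread (a reclaimer) first sends a neutralizing signal to every participating thread, then scans the reservations of all threads, then frees every node in its limbo bag that is not reserved. Assumption: if a thread $T_i$ sends a signal to $T_j$, then by the time $T_i$ finishes sending it, $T_j$ has received it and will execute the signal handler before taking any further step of its program. *)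

From mathcomp Require Import all_boot.
Set Implicit Arguments. Unset Strict Implicit. Unset Printing Implicit Defensive.

(* Nodes and threads are natural numbers; the participating threads are
   0, ..., N-1; each thread has r reservation slots 0, ..., r-1. *)
Definition node := nat.
Definition thread := nat.

(* Idle      : outside an operation / in the preamble (no shared access)
   AtChk     : checkpoint (sigsetjmp) just set, read phase about to begin
   Cleared   : reservations cleared, restartable := true not yet stored
   Reading   : in the read phase (after restartable := true)
   Reserving : end of read phase, writing reservation slots
   Writing   : write phase (after restartable := false) *)
Inductive pcT := Idle | AtChk | Cleared | Reading | Reserving | Writing.

Inductive recT :=
| RNone
| RSignal of seq thread                   (* threads still to be signalled *)
| RScan of seq (thread * nat) & seq node. (* slots still to scan, reserved nodes seen *)

Record tstate := TS {
  pc : pcT;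
  restartable : bool;
  refs : seq node;   (* private references obtained in the current read phase *)
  vis : seq node;    (* (ghost) nodes linked at some time since the current
                        read phase started: exactly the nodes a traversal
                        starting from the entry points may discover *)
  own : seq node;    (* freshly allocated, not yet published nodes *)
  pend : seq node;   (* nodes unlinked by this thread, not yet retired *)
  limbo : seq node;
  rec : recT
}.

Record state := ST {
  th : thread -> tstate;
  resv : thread -> nat -> option node;
  linked : seq node;   (* nodes reachable from the entry points *)
  used : seq node;     (* nodes ever allocated *)
  freed : seq node
}.

Definition upd {A} (f : nat -> A) (i : nat) (v : A) : nat -> A :=
  fun j => if j == i then v else f j.

Definition set_th (s : state) t (ts : tstate) : state :=
  ST (upd (th s) t ts) (resv s) (linked s) (used s) (freed s).

(* Signal handler: if restartable, siglongjmp to the checkpoint, discarding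
   the private references of the read phase; otherwise simply return. *)
Definition handler (ts : tstate) : tstate :=
  if restartable ts then
    TS AtChk (restartable ts) [::] (vis ts) (own ts) (pend ts) (limbo ts) (rec ts)
  else ts.

Definition reserved_by (s : state) (r : nat) (t : thread) (x : node) : Prop :=
  exists2 k, k < r & resv s t k = Some x.

Inductive label := Access of thread & node | Tau.

Section Step.
Variables (N r threshold : nat).

Inductive step : state -> label -> state -> Prop :=
| s_begin s t ts : t < N -> th s t = ts -> rec ts = RNone -> pc ts = Idle ->
    step s Tau (set_th s t (TS AtChk (restartable ts) (refs ts) (vis ts)
                  (own ts) (pend ts) (limbo ts) (rec ts)))
| s_clear s t ts : t < N -> th s t = ts -> rec ts = RNone -> pc ts = AtChk ->
    step s Tau (ST (upd (th s) t (TS Cleared (restartable ts) (refs ts) (vis ts)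
                       (own ts) (pend ts) (limbo ts) (rec ts)))
                   (upd (resv s) t (fun _ => None)) (linked s) (used s) (freed s))
(* store true into restartable; the traversal starts from the entry points *)
| s_start s t ts : t < N -> th s t = ts -> rec ts = RNone -> pc ts = Cleared ->
    step s Tau (set_th s t (TS Reading true [::] (linked s)
                  (own ts) (pend ts) (limbo ts) (rec ts)))
| s_read s t ts x : t < N -> th s t = ts -> rec ts = RNone -> pc ts = Reading ->
    x \in vis ts ->
    step s (Access t x) (set_th s t (TS Reading (restartable ts) (x :: refs ts)
                  (vis ts) (own ts) (pend ts) (limbo ts) (rec ts)))
| s_reserve s t ts k x : t < N -> th s t = ts -> rec ts = RNone ->
    (pc ts = Reading \/ pc ts = Reserving) -> k < r -> x \in refs ts ->
    step s Tau (ST (upd (th s) t (TS Reserving (restartable ts) (refs ts) (vis ts)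
                       (own ts) (pend ts) (limbo ts) (rec ts)))
                   (upd (resv s) t (upd (resv s t) k (Some x)))
                   (linked s) (used s) (freed s))
| s_enterw s t ts : t < N -> th s t = ts -> rec ts = RNone ->
    (pc ts = Reading \/ pc ts = Reserving) ->
    step s Tau (set_th s t (TS Writing false (refs ts) (vis ts)
                  (own ts) (pend ts) (limbo ts) (rec ts)))
| s_waccess s t ts x : t < N -> th s t = ts -> rec ts = RNone -> pc ts = Writing ->
    (reserved_by s r t x \/ x \in own ts) ->
    step s (Access t x) s
| s_alloc s t ts x : t < N -> th s t = ts -> rec ts = RNone ->
    (pc ts = Idle \/ pc ts = Writing) -> x \notin used s ->
    step s Tau (ST (upd (th s) t (TS (pc ts) (restartable ts) (refs ts) (vis ts)
                       (x :: own ts) (pend ts) (limbo ts) (rec ts)))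
                   (resv s) (linked s) (x :: used s) (freed s))
| s_link s t ts x : t < N -> th s t = ts -> rec ts = RNone -> pc ts = Writing ->
    x \in own ts ->
    step s (Access t x)
      (ST (fun j => let tj := upd (th s) t (TS (pc ts) (restartable ts) (refs ts)
                                (vis ts) (rem x (own ts)) (pend ts) (limbo ts)
                                (rec ts)) j in
                    TS (pc tj) (restartable tj) (refs tj) (x :: vis tj) (own tj)
                       (pend tj) (limbo tj) (rec tj))
          (resv s) (x :: linked s) (used s) (freed s))
| s_unlink s t ts x : t < N -> th s t = ts -> rec ts = RNone -> pc ts = Writing ->
    x \in linked s -> reserved_by s r t x ->
    step s (Access t x)
      (ST (upd (th s) t (TS (pc ts) (restartable ts) (refs ts) (vis ts)
                           (own ts) (x :: pend ts) (limbo ts) (rec ts)))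
          (resv s) [seq y <- linked s | y != x] (used s) (freed s))
| s_retire s t ts x : t < N -> th s t = ts -> rec ts = RNone ->
    (pc ts = Idle \/ pc ts = Writing) -> x \in pend ts ->
    step s Tau (set_th s t (TS (pc ts) (restartable ts) (refs ts) (vis ts)
                  (own ts) (rem x (pend ts)) (x :: limbo ts) (rec ts)))
| s_endw s t ts (next : bool) : t < N -> th s t = ts -> rec ts = RNone ->
    pc ts = Writing ->
    step s Tau (set_th s t (TS (if next then AtChk else Idle) (restartable ts)
                  (refs ts) (vis ts) (own ts) (pend ts) (limbo ts) (rec ts)))
| s_rstart s t ts : t < N -> th s t = ts -> rec ts = RNone ->
    (pc ts = Idle \/ pc ts = Writing) -> threshold < size (limbo ts) ->
    step s Tau (set_th s t (TS (pc ts) (restartable ts) (refs ts) (vis ts)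
                  (own ts) (pend ts) (limbo ts)
                  (RSignal [seq j <- iota 0 N | j != t])))
(* send a neutralizing signal to j; by the delivery assumption j runs the
   handler before taking any further step *)
| s_signal s t ts j rest : t < N -> th s t = ts -> rec ts = RSignal (j :: rest) ->
    step s Tau (set_th (set_th s j (handler (th s j))) t
                  (TS (pc ts) (restartable ts) (refs ts) (vis ts)
                      (own ts) (pend ts) (limbo ts) (RSignal rest)))
| s_toscan s t ts : t < N -> th s t = ts -> rec ts = RSignal [::] ->
    step s Tau (set_th s t (TS (pc ts) (restartable ts) (refs ts) (vis ts)
                  (own ts) (pend ts) (limbo ts)
                  (RScan [seq (j, k) | j <- iota 0 N, k <- iota 0 r] [::])))
| s_scan s t ts j k rest acc : t < N -> th s t = ts ->
    rec ts = RScan ((j, k) :: rest) acc ->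
    step s Tau (set_th s t (TS (pc ts) (restartable ts) (refs ts) (vis ts)
                  (own ts) (pend ts) (limbo ts)
                  (RScan rest (if resv s j k is Some y then y :: acc else acc))))
| s_free s t ts acc : t < N -> th s t = ts -> rec ts = RScan [::] acc ->
    step s Tau
      (ST (upd (th s) t (TS (pc ts) (restartable ts) (refs ts) (vis ts)
                           (own ts) (pend ts) [seq x <- limbo ts | x \in acc] RNone))
          (resv s) (linked s) (used s)
          ([seq x <- limbo ts | x \notin acc] ++ freed s)).

Definition init_state (init_nodes : seq node) : state :=
  ST (fun _ => TS Idle false [::] [::] [::] [::] [::] RNone)
     (fun _ _ => None) init_nodes init_nodes [::].

Inductive reachable (init_nodes : seq node) : state -> Prop :=
| reach_init : reachable init_nodes (init_state init_nodes)
| reach_step s l s' : reachable init_nodes s -> step s l s' ->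
    reachable init_nodes s'.

End Step.

From mathcomp Require Import all_boot.
Set Implicit Arguments. Unset Strict Implicit. Unset Printing Implicit Defensive.

(* A retired node (pending, in a limbo bag, or freed) is unlinked and owned by no
   thread, so no thread can discover it afresh: a read phase only traverses nodes linked
   since it started, and a thread only reserves nodes it has read.  Hence, for such a
   node x, "x is safe from thread j" (x is not among the nodes j's traversal may reach,
   j holds no private reference to x, and no reservation of j is x, the last two
   mattering only inside an operation phase since a new read phase first clears the
   reservations) is preserved by every step.  After the neutralizing signal every thread
   is safe from x or in a write phase; a writer keeps its reservations unchanged until
   the phase ends, after which it is safe.  The scan of all reservations happens after
   all signals, so a limbo node the scan did not see is safe from every thread when it
   is freed, and stays so.  Every access is to a discovered node in a read phase, a
   reserved node in a write phase, an owned node or a linked node, none of which a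
   freed node can be. *)

Ltac case_actor := rewrite /set_th /upd /=; case: eqP => [?|_]; [subst=> /=|].

Record heap := Heap {
  hlinked : seq node; hused : seq node; hfreed : seq node;
  hown : thread -> seq node; hpend : thread -> seq node; hlimbo : thread -> seq node }.

Definition heap_of (s : state) : heap :=
  Heap (linked s) (used s) (freed s)
    (fun j => own (th s j)) (fun j => pend (th s j)) (fun j => limbo (th s j)).

Definition heap_eq (h h' : heap) : Prop :=
  [/\ hlinked h = hlinked h', hused h = hused h', hfreed h = hfreed h' &
      forall j, [/\ hown h j = hown h' j, hpend h j = hpend h' j & hlimbo h j = hlimbo h' j]].

Definition retired (h : heap) (x : node) : Prop :=
  [\/ exists j, x \in hpend h j, exists j, x \in hlimbo h j | x \in hfreed h].

Record heap_ok (h : heap) : Prop := {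
  used_linked : {subset hlinked h <= hused h};
  used_owned : forall j, {subset hown h j <= hused h};
  used_retired : forall x, retired h x -> x \in hused h;
  own_disjoint : forall i j x, x \in hown h i -> x \in hown h j -> i = j;
  own_uniq : forall j, uniq (hown h j);
  own_unlinked : forall j x, x \in hown h j -> x \notin hlinked h;
  retired_unlinked : forall x, retired h x -> x \notin hlinked h;
  retired_unowned : forall j x, retired h x -> x \notin hown h j }.

Definition alloc_heap (t : thread) (x : node) (h : heap) : heap :=
  Heap (hlinked h) (x :: hused h) (hfreed h)
    (upd (hown h) t (x :: hown h t)) (hpend h) (hlimbo h).

Definition link_heap (t : thread) (x : node) (h : heap) : heap :=
  Heap (x :: hlinked h) (hused h) (hfreed h)
    (upd (hown h) t (rem x (hown h t))) (hpend h) (hlimbo h).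

Definition unlink_heap (t : thread) (x : node) (h : heap) : heap :=
  Heap [seq y <- hlinked h | y != x] (hused h) (hfreed h)
    (hown h) (upd (hpend h) t (x :: hpend h t)) (hlimbo h).

Definition retire_heap (t : thread) (x : node) (h : heap) : heap :=
  Heap (hlinked h) (hused h) (hfreed h)
    (hown h) (upd (hpend h) t (rem x (hpend h t))) (upd (hlimbo h) t (x :: hlimbo h t)).

Definition free_heap (t : thread) (acc : seq node) (h : heap) : heap :=
  Heap (hlinked h) (hused h) ([seq y <- hlimbo h t | y \notin acc] ++ hfreed h)
    (hown h) (hpend h) (upd (hlimbo h) t [seq y <- hlimbo h t | y \in acc]).

Inductive heap_step (h : heap) : heap -> Prop :=
| HAlloc t x : x \notin hused h -> heap_step h (alloc_heap t x h)
| HLink t x : x \in hown h t -> heap_step h (link_heap t x h)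
| HUnlink t x : x \in hlinked h -> heap_step h (unlink_heap t x h)
| HRetire t x : x \in hpend h t -> heap_step h (retire_heap t x h)
| HFree t acc : heap_step h (free_heap t acc h).

Lemma mem_upd (f : nat -> seq node) t v j y :
  (y \in upd f t v j) = if j == t then y \in v else y \in f j.
Proof. by rewrite /upd; case: eqP. Qed.

Lemma heap_ok_eq h h' : heap_eq h h' -> heap_ok h -> heap_ok h'.
Proof.
case: h h' => L U F O P B [L' U' F' O' P' B'] [/= <- <- <- E] ok.
have [eO eP eB] : [/\ O' =1 O, P' =1 P & B' =1 B].
  by split=> j; case: (E j).
have eR x : retired (Heap L U F O' P' B') x -> retired (Heap L U F O P B) x.
  case=> [[j]|[j]|] /=; rewrite ?eP ?eB => hx; [constructor 1 | constructor 2 | by constructor 3];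
  by exists j.
constructor=> /=.
- exact: (used_linked ok).
- by move=> j x; rewrite eO; apply: (used_owned ok).
- by move=> x /eR; apply: (used_retired ok).
- by move=> i j x; rewrite !eO; apply: (own_disjoint ok).
- by move=> j; rewrite eO; apply: (own_uniq ok).
- by move=> j x; rewrite eO; apply: (own_unlinked ok).
- by move=> x /eR; apply: (retired_unlinked ok).
- by move=> j x /eR; rewrite eO; apply: (retired_unowned ok).
Qed.

Section HeapOps.
Variables (h : heap) (t : thread).
Hypothesis ok : heap_ok h.

Lemma unused_fresh x : x \notin hused h ->
  [/\ x \notin hlinked h, forall j, x \notin hown h j & ~ retired h x].
Proof.
move=> xU; split=> [|j|/(used_retired ok)]; last by rewrite (negbTE xU).
  by apply: contra xU; apply: (used_linked ok).
by apply: contra xU; apply: (used_owned ok).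
Qed.

Lemma heap_ok_alloc x : x \notin hused h -> heap_ok (alloc_heap t x h).
Proof.
move=> /unused_fresh [xL xO xR].
have mem_own j y : (y \in hown (alloc_heap t x h) j) = (j == t) && (y == x) || (y \in hown h j).
  by rewrite /= mem_upd; case: eqP => [->|_]; rewrite ?in_cons.
constructor=> /=.
- by move=> y /(used_linked ok) yU; rewrite in_cons yU orbT.
- move=> j y; rewrite mem_own => /orP [/andP [_ /eqP ->]|/(used_owned ok) yU];
  by rewrite in_cons ?eqxx ?yU ?orbT.
- by move=> y /(used_retired ok) yU; rewrite in_cons yU orbT.
- move=> i j y; rewrite !mem_own; case: (y =P x) => [->|_].
    by rewrite !andbT !(negbTE (xO _)) !orbF => /eqP -> /eqP ->.
  by rewrite !andbF; apply: (own_disjoint ok).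
- by move=> j; rewrite /= /upd; case: eqP => _; rewrite ?cons_uniq ?xO (own_uniq ok).
- by move=> j y; rewrite mem_own => /orP [/andP [_ /eqP ->] //|]; apply: (own_unlinked ok).
- exact: (retired_unlinked ok).
- move=> j y yR; rewrite mem_own (negbTE (retired_unowned ok j yR)) orbF.
  by apply/nandP; right; apply: contraPneq xR => <-.
Qed.

Lemma heap_ok_link x : x \in hown h t -> heap_ok (link_heap t x h).
Proof.
move=> xO.
have mem_own j y : y \in hown (link_heap t x h) j -> y \in hown h j /\ y != x.
  rewrite /= mem_upd; case: eqP => [->|ne].
    by rewrite (mem_rem_uniq _ (own_uniq ok t)) inE => /andP [].
  by move=> yO; split=> //; apply/eqP => eyx; apply: ne; apply: (own_disjoint ok yO); rewrite eyx.
constructor=> /=.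
- move=> y; rewrite in_cons => /orP [/eqP ->|]; first exact: (used_owned ok) xO.
  exact: (used_linked ok).
- by move=> j y /mem_own [/(used_owned ok)].
- exact: (used_retired ok).
- by move=> i j y /mem_own [yO _] /mem_own [yO' _]; apply: (own_disjoint ok) yO yO'.
- by move=> j; rewrite /= /upd; case: eqP => _; rewrite ?rem_uniq ?(own_uniq ok).
- by move=> j y /mem_own [/(own_unlinked ok) yL yx]; rewrite in_cons negb_or yx.
- move=> y yR; rewrite in_cons negb_or (retired_unlinked ok yR) andbT.
  by apply: contraNneq (retired_unowned ok t yR) => ->.
- by move=> j y yR; apply/negP => /mem_own [yO _]; move: (retired_unowned ok j yR); rewrite yO.
Qed.

Lemma heap_ok_unlink x : x \in hlinked h -> heap_ok (unlink_heap t x h).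
Proof.
move=> xL.
have mem_linked y : y \in [seq z <- hlinked h | z != x] -> y \in hlinked h.
  by rewrite mem_filter => /andP [].
have unlinked_retired y : retired (unlink_heap t x h) y -> y = x \/ retired h y.
  case=> [[j]|[j yB]|yF]; last by right; constructor 3.
    rewrite /= mem_upd; case: eqP => _; rewrite ?in_cons; last by right; constructor 1; exists j.
    by case/orP=> [/eqP|yP]; [left | right; constructor 1; exists t].
  by right; constructor 2; exists j.
constructor=> /=.
- by move=> y /mem_linked; apply: (used_linked ok).
- exact: (used_owned ok).
- by move=> y /unlinked_retired [->|]; [apply: (used_linked ok) | apply: (used_retired ok)].
- exact: (own_disjoint ok).
- exact: (own_uniq ok).
- by move=> j y /(own_unlinked ok); apply: contra; apply: mem_linked.
- move=> y /unlinked_retired [->|/(retired_unlinked ok)]; first by rewrite mem_filter eqxx.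
  by apply: contra; apply: mem_linked.
- move=> j y /unlinked_retired [->|/(retired_unowned ok j)] //.
  by apply: contraL xL; apply: (own_unlinked ok).
Qed.

Lemma heap_ok_less_retired h' : hlinked h' = hlinked h -> hused h' = hused h ->
  hown h' = hown h -> (forall y, retired h' y -> retired h y) -> heap_ok h'.
Proof.
move=> eL eU eO R; constructor; rewrite ?eL ?eU ?eO.
- exact: (used_linked ok).
- exact: (used_owned ok).
- by move=> y /R; apply: (used_retired ok).
- exact: (own_disjoint ok).
- exact: (own_uniq ok).
- exact: (own_unlinked ok).
- by move=> y /R; apply: (retired_unlinked ok).
- by move=> j y /R; apply: (retired_unowned ok).
Qed.

Lemma retired_retire x y : x \in hpend h t -> retired (retire_heap t x h) y -> retired h y.
Proof.
move=> xP; case=> [[j]|[j]|yF]; rewrite /= ?mem_upd; last by constructor 3.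
  by case: eqP => _ yP; constructor 1; [exists t; apply: mem_rem yP | exists j].
case: eqP => _; last by constructor 2; exists j.
by rewrite in_cons => /orP [/eqP ->|yB]; [constructor 1 | constructor 2]; exists t.
Qed.

Lemma retired_free acc y : retired (free_heap t acc h) y -> retired h y.
Proof.
case=> [[j yP]|[j]|]; rewrite /= ?mem_upd; first by constructor 1; exists j.
  case: eqP => _ yB; constructor 2; last by exists j.
  by exists t; move: yB; rewrite mem_filter => /andP [].
by rewrite mem_cat mem_filter => /orP [/andP [_ yB]|yF]; [constructor 2; exists t | constructor 3].
Qed.

End HeapOps.

Lemma heap_ok_step h h' : heap_ok h -> heap_step h h' -> heap_ok h'.
Proof.
move=> ok; case=> [t x|t x|t x|t x xP|t acc].
- exact: heap_ok_alloc.
- exact: heap_ok_link.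
- exact: heap_ok_unlink.
- by apply: (heap_ok_less_retired ok) => // y; apply: retired_retire.
- by apply: (heap_ok_less_retired ok) => // y; apply: retired_free.
Qed.

Section Invariant.
Variables (N r threshold : nat).
Local Notation step := (step N r threshold).

Lemma heap_of_step s l s' : step s l s' ->
  heap_eq (heap_of s) (heap_of s') \/ exists2 h, heap_step (heap_of s) h & heap_eq h (heap_of s').
Proof.
case=> {s l s'}.
- by move=> s t ts _ <- *; left; split=> //= j; case_actor.
- by move=> s t ts _ <- *; left; split=> //= j; case_actor.
- by move=> s t ts _ <- *; left; split=> //= j; case_actor.
- by move=> s t ts x _ <- *; left; split=> //= j; case_actor.
- by move=> s t ts k x _ <- *; left; split=> //= j; case_actor.
- by move=> s t ts _ <- *; left; split=> //= j; case_actor.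
- by move=> s t ts x *; left.
- move=> s t ts x _ <- _ _ xU; right; exists (alloc_heap t x (heap_of s)); first exact: HAlloc.
  by split=> //= j; case_actor.
- move=> s t ts x _ <- _ _ xO; right; exists (link_heap t x (heap_of s)); first exact: HLink.
  by split=> //= j; case_actor.
- move=> s t ts x _ <- _ _ xL _; right; exists (unlink_heap t x (heap_of s)); first exact: HUnlink.
  by split=> //= j; case_actor.
- move=> s t ts x _ <- _ _ xP; right; exists (retire_heap t x (heap_of s)); first exact: HRetire.
  by split=> //= j; case_actor.
- by move=> s t ts nx _ <- *; left; split=> //= j; case_actor.
- by move=> s t ts _ <- *; left; split=> //= j; case_actor.
- move=> s t ts j0 rest _ <- *; left; split=> //= j; case_actor; first by [].
  by case: eqP => [->|_] //; rewrite /handler; case: ifP.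
- by move=> s t ts _ <- *; left; split=> //= j; case_actor.
- by move=> s t ts j0 k rest acc _ <- *; left; split=> //= j; case_actor.
- move=> s t ts acc _ <- *; right; exists (free_heap t acc (heap_of s)); first exact: HFree.
  by split=> //= j; case_actor.
Qed.

Definition in_read_phase (p : pcT) : bool :=
  match p with Reading | Reserving => true | _ => false end.
Definition idle_or_writing (p : pcT) : bool :=
  match p with Idle | Writing => true | _ => false end.
Definition may_access (p : pcT) : bool :=
  match p with Reading | Reserving | Writing => true | _ => false end.

Definition thread_ok (ts : tstate) (row : nat -> option node) : Prop :=
  [/\ in_read_phase (pc ts) -> restartable ts,
      idle_or_writing (pc ts) -> ~~ restartable ts,
      pc ts = Cleared -> forall k, row k = None &
      rec ts <> RNone -> idle_or_writing (pc ts)].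

Definition threads_ok (s : state) : Prop := forall j, thread_ok (th s j) (resv s j).

Lemma thread_ok_same ts ts' row : thread_ok ts row ->
  pc ts' = pc ts -> restartable ts' = restartable ts -> rec ts' = rec ts ->
  thread_ok ts' row.
Proof. by move=> ok hpc hr hrec; rewrite /thread_ok hpc hr hrec. Qed.

Lemma thread_ok_progress ts ts' row : thread_ok ts row -> rec ts <> RNone ->
  pc ts' = pc ts -> restartable ts' = restartable ts -> thread_ok ts' row.
Proof.
by move=> [h1 h2 h3 h4] hrec hpc hr; rewrite /thread_ok hpc hr; split=> // _; apply: h4.
Qed.

Lemma thread_ok_handler ts row : thread_ok ts row -> thread_ok (handler ts) row.
Proof.
rewrite /handler; case: ifP => // hr [_ h2 _ h4]; split=> //= hrec.
by have := h4 hrec => /h2; rewrite hr.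
Qed.

Lemma threads_ok_step s l s' : threads_ok s -> step s l s' -> threads_ok s'.
Proof.
move=> ok st j; case: st ok => {s l s'}.
- move=> s t ts _ <- hrec _ ok; case_actor; [by split; rewrite ?hrec | exact: ok].
- move=> s t ts _ <- hrec _ ok; case_actor; [by split; rewrite ?hrec | exact: ok].
- move=> s t ts _ <- hrec _ ok; case_actor; [by split; rewrite ?hrec | exact: ok].
- move=> s t ts x _ <- hrec hpc _ ok; case_actor; last exact: ok.
  by have [+ _ _ _] := ok t; rewrite hpc => /(_ isT) hr; split; rewrite ?hrec.
- move=> s t ts k x _ <- hrec hpc _ _ ok; case_actor; last exact: ok.
  have hr : restartable (th s t) by have [+ _ _ _] := ok t; apply; case: hpc => ->.
  by split; rewrite ?hr ?hrec.
- move=> s t ts _ <- hrec _ ok; case_actor; [by split; rewrite ?hrec | exact: ok].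
- by move=> s t ts x _ _ _ _ _ ok.
- move=> s t ts x _ <- _ _ _ ok; case_actor; [by apply: (thread_ok_same (ok t)) | exact: ok].
- move=> s t ts x _ <- _ _ _ ok; case_actor; [by apply: (thread_ok_same (ok t)) | exact: ok].
- move=> s t ts x _ <- _ _ _ _ ok; case_actor; [by apply: (thread_ok_same (ok t)) | exact: ok].
- move=> s t ts x _ <- _ _ _ ok; case_actor; [by apply: (thread_ok_same (ok t)) | exact: ok].
- move=> s t ts next _ <- hrec hpc ok; case_actor; last exact: ok.
  have [_ + _ _] := ok t; rewrite hpc => /(_ isT) hr.
  by case: next; split; rewrite ?hr ?hrec.
- move=> s t ts _ <- _ hpc _ ok; case_actor; last exact: ok.
  by have [h1 h2 h3 _] := ok t; split=> // _; case: hpc => ->.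
- move=> s t ts j0 rest _ <- hrec ok; case_actor.
    by apply: (thread_ok_progress (ok t)); rewrite ?hrec.
  case: eqP => [->|_]; [exact/thread_ok_handler/ok | exact: ok].
- move=> s t ts _ <- hrec ok; case_actor; last exact: ok.
  by apply: (thread_ok_progress (ok t)); rewrite ?hrec.
- move=> s t ts j0 k rest acc _ <- hrec ok; case_actor; last exact: ok.
  by apply: (thread_ok_progress (ok t)); rewrite ?hrec.
- move=> s t ts acc _ <- hrec ok; case_actor; last exact: ok.
  by apply: (thread_ok_progress (ok t)); rewrite ?hrec.
Qed.

Definition detached (s : state) (x : node) : Prop :=
  x \notin linked s /\ forall j, x \notin own (th s j).

Definition safe_from (ts : tstate) (row : nat -> option node) (x : node) : Prop :=
  [/\ pc ts = Reading -> x \notin vis ts,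
      in_read_phase (pc ts) -> x \notin refs ts &
      may_access (pc ts) -> forall k, k < r -> row k <> Some x].

Lemma in_read_phase_may_access p : in_read_phase p -> may_access p.
Proof. by case: p. Qed.

Lemma safe_from_inactive ts row x : ~~ may_access (pc ts) -> safe_from ts row x.
Proof. by rewrite /safe_from; case: (pc ts). Qed.

Lemma safe_from_same ts ts' row x : pc ts' = pc ts -> vis ts' = vis ts ->
  refs ts' = refs ts -> safe_from ts row x -> safe_from ts' row x.
Proof. by rewrite /safe_from => -> -> ->. Qed.

Lemma safe_from_publish ts row x y : x != y -> safe_from ts row x ->
  safe_from (TS (pc ts) (restartable ts) (refs ts) (y :: vis ts) (own ts) (pend ts)
               (limbo ts) (rec ts)) row x.
Proof. by move=> xy [xV xR xW]; split=> //= /xV; rewrite in_cons (negbTE xy). Qed.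

Lemma safe_from_handler ts row x : safe_from ts row x -> safe_from (handler ts) row x.
Proof. by rewrite /handler; case: ifP => // _ _; apply: safe_from_inactive. Qed.

Lemma safe_from_step s l s' x j : thread_ok (th s j) (resv s j) -> detached s x ->
  step s l s' -> safe_from (th s j) (resv s j) x -> safe_from (th s' j) (resv s' j) x.
Proof.
move=> ok dx st; case: st ok dx => {s l s'}.
- by move=> s t ts _ <- _ _ _ _ sx; case_actor; first exact: safe_from_inactive.
- by move=> s t ts _ <- _ _ _ _ sx; case_actor; first exact: safe_from_inactive.
- move=> s t ts _ <- _ hpc ok [xL _] sx; case_actor; last done.
  by case: ok => _ _ /(_ hpc) clr _; split=> // _ k _; rewrite clr.
- move=> s t ts y _ <- _ hpc yV ok _ sx; case_actor; last done.
  case: sx; rewrite hpc => /(_ erefl) xV /(_ isT) xR xW; split=> // _.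
  by rewrite in_cons negb_or xR andbT; apply: contraNneq xV => ->.
- move=> s t ts k y _ <- _ hpc _ yR ok _ sx; case_actor; last done.
  have hR : in_read_phase (pc (th s t)) by case: hpc => ->.
  case: sx => _ /(_ hR) xR /(_ (in_read_phase_may_access hR)) xW; split=> // _ k' k'r.
  rewrite /upd; case: eqP => _; last exact: xW.
  by case=> eyx; move: xR; rewrite -eyx yR.
- move=> s t ts _ <- _ hpc ok _ sx; case_actor; last done.
  have hR : in_read_phase (pc (th s t)) by case: hpc => ->.
  by case: sx => _ _ /(_ (in_read_phase_may_access hR)) xW; split.
- by [].
- by move=> s t ts y _ <- _ _ _ _ _ sx; case_actor; first apply: (safe_from_same _ _ _ sx).
- move=> s t ts y _ <- _ _ yO ok [_ xO] sx.
  have xy : x != y by apply: contraNneq (xO t) => ->.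
  apply: (safe_from_publish xy); rewrite /upd; case: eqP => [?|_] //; subst.
  exact: (safe_from_same _ _ _ sx).
- by move=> s t ts y _ <- _ _ _ _ _ _ sx; case_actor; first apply: (safe_from_same _ _ _ sx).
- by move=> s t ts y _ <- _ _ _ _ _ sx; case_actor; first apply: (safe_from_same _ _ _ sx).
- by move=> s t ts [] _ <- _ _ _ _ sx; case_actor; first exact: safe_from_inactive.
- by move=> s t ts _ <- _ _ _ _ _ sx; case_actor; first apply: (safe_from_same _ _ _ sx).
- move=> s t ts j0 rest _ <- _ _ _ sx; case_actor; first exact: (safe_from_same _ _ _ sx).
  by case: eqP => [<-|_] //; apply: safe_from_handler.
- by move=> s t ts _ <- _ _ _ sx; case_actor; first apply: (safe_from_same _ _ _ sx).
- by move=> s t ts j0 k rest acc _ <- _ _ _ sx; case_actor; first apply: (safe_from_same _ _ _ sx).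
- by move=> s t ts acc _ <- _ _ _ sx; case_actor; first apply: (safe_from_same _ _ _ sx).
Qed.

Lemma handler_idle_or_writing ts row : thread_ok ts row -> idle_or_writing (pc ts) ->
  handler ts = ts.
Proof. by case=> _ nr _ _ /nr; rewrite /handler => /negbTE ->. Qed.

Lemma writer_step s l s' j : thread_ok (th s j) (resv s j) -> step s l s' ->
  pc (th s j) = Writing ->
  pc (th s' j) = Writing /\ resv s' j = resv s j \/ ~~ may_access (pc (th s' j)).
Proof.
move=> ok st w; case: st ok w => {s l s'}.
- by move=> s t ts _ <- _ hpc _ w; case_actor; [rewrite hpc in w | left].
- by move=> s t ts _ <- _ hpc _ w; case_actor; [rewrite hpc in w | left].
- by move=> s t ts _ <- _ hpc _ w; case_actor; [rewrite hpc in w | left].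
- by move=> s t ts y _ <- _ hpc _ _ w; case_actor; [rewrite hpc in w | left].
- by move=> s t ts k y _ <- _ hpc _ _ _ w; case_actor; [case: hpc; rewrite w | left].
- by move=> s t ts _ <- _ hpc _ w; case_actor; [case: hpc; rewrite w | left].
- by left.
- by move=> s t ts y _ <- *; case_actor; left.
- by move=> s t ts y _ <- _ _ _ _ w; left; rewrite /upd /=; case: eqP => [<-|].
- by move=> s t ts y _ <- *; case_actor; left.
- by move=> s t ts y _ <- *; case_actor; left.
- by move=> s t ts [] _ <- *; case_actor; [right | left | right | left].
- by move=> s t ts _ <- *; case_actor; left.
- move=> s t ts j0 rest _ <- _ ok w; case_actor; first by left.
  case: eqP => [<-|_]; last by left.
  by rewrite (handler_idle_or_writing ok) ?w //; left.
- by move=> s t ts _ <- *; case_actor; left.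
- by move=> s t ts j0 k rest acc _ <- *; case_actor; left.
- by move=> s t ts acc _ <- *; case_actor; left.
Qed.

Lemma safe_or_frozen_writer_step (P : (nat -> option node) -> Prop) s l s' x j :
  thread_ok (th s j) (resv s j) -> detached s x -> step s l s' ->
  safe_from (th s j) (resv s j) x \/ pc (th s j) = Writing /\ P (resv s j) ->
  safe_from (th s' j) (resv s' j) x \/ pc (th s' j) = Writing /\ P (resv s' j).
Proof.
move=> ok dx st [sx|[w Pw]]; first by left; apply: safe_from_step ok dx st sx.
by case: (writer_step ok st w) => [[-> ->]|?]; [right | left; apply: safe_from_inactive].
Qed.

Lemma safe_from_writer ts row x : pc ts = Writing ->
  (forall k, k < r -> row k <> Some x) -> safe_from ts row x.
Proof. by rewrite /safe_from => ->. Qed.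

Lemma idle_or_writing_safe ts row x : idle_or_writing (pc ts) ->
  safe_from ts row x \/ pc ts = Writing.
Proof. by case E: (pc ts) => // _; [left; apply: safe_from_inactive; rewrite E | right]. Qed.

Lemma handler_safe_or_writer ts row x : thread_ok ts row ->
  safe_from (handler ts) row x \/ pc (handler ts) = Writing.
Proof.
rewrite /handler => -[rR _ _ _]; case: ifP => [_|nr]; first by left; apply: safe_from_inactive.
have := contraFN rR nr; case E: (pc ts) => // _;
  by [right | left; apply: safe_from_inactive; rewrite E].
Qed.

Lemma handler_rec ts : rec (handler ts) = rec ts.
Proof. by rewrite /handler; case: ifP. Qed.

Lemma handler_limbo ts : limbo (handler ts) = limbo ts.
Proof. by rewrite /handler; case: ifP. Qed.

Definition slots_tracked (rest : seq (thread * nat)) (acc : seq node) (j : thread) (x : node)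
    (row : nat -> option node) : Prop :=
  forall k, k < r -> row k = Some x -> (j, k) \in rest \/ x \in acc.

Definition freed_safe (s : state) : Prop :=
  forall x, x \in freed s -> forall j, j < N -> safe_from (th s j) (resv s j) x.

Definition signal_safe (s : state) : Prop :=
  forall u rest x, rec (th s u) = RSignal rest -> x \in limbo (th s u) ->
  forall j, j < N -> j \notin rest ->
  safe_from (th s j) (resv s j) x \/ pc (th s j) = Writing.

Definition scan_safe (s : state) : Prop :=
  forall u rest acc x, rec (th s u) = RScan rest acc -> x \in limbo (th s u) ->
  forall j, j < N -> safe_from (th s j) (resv s j) x \/
    pc (th s j) = Writing /\ slots_tracked rest acc j x (resv s j).

Record inv (s : state) : Prop := {
  inv_threads : threads_ok s;
  inv_heap : heap_ok (heap_of s);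
  inv_freed : freed_safe s;
  inv_signal : signal_safe s;
  inv_scan : scan_safe s }.

Lemma retired_detached s x : inv s -> retired (heap_of s) x -> detached s x.
Proof.
move=> iv xR; split=> [|j]; first exact: (retired_unlinked (inv_heap iv)).
exact: (retired_unowned (inv_heap iv)).
Qed.

Lemma limbo_detached s u x : inv s -> x \in limbo (th s u) -> detached s x.
Proof. by move=> iv xB; apply: (retired_detached iv); constructor 2; exists u. Qed.

Lemma freed_detached s x : inv s -> x \in freed s -> detached s x.
Proof. by move=> iv xF; apply: (retired_detached iv); constructor 3. Qed.

Lemma signal_safe_persist s l s' : inv s -> step s l s' -> forall u rest x,
  rec (th s u) = RSignal rest -> x \in limbo (th s u) -> forall j, j < N -> j \notin rest ->
  safe_from (th s' j) (resv s' j) x \/ pc (th s' j) = Writing.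
Proof.
move=> iv st u rest x hrec xB j jN jr.
have base : safe_from (th s j) (resv s j) x \/ pc (th s j) = Writing /\ True.
  by case: (inv_signal iv hrec xB jN jr) => [|w]; [left | right].
have := safe_or_frozen_writer_step (P := fun _ => True) (inv_threads iv j)
  (limbo_detached iv xB) st base.
by case=> [|[]]; [left | right].
Qed.

Lemma scan_safe_persist s l s' : inv s -> step s l s' -> forall u rest acc x,
  rec (th s u) = RScan rest acc -> x \in limbo (th s u) -> forall j, j < N ->
  safe_from (th s' j) (resv s' j) x \/
    pc (th s' j) = Writing /\ slots_tracked rest acc j x (resv s' j).
Proof.
move=> iv st u rest acc x hrec xB j jN.
exact: (safe_or_frozen_writer_step (P := slots_tracked rest acc j x) (inv_threads iv j)
  (limbo_detached iv xB) st (inv_scan iv hrec xB jN)).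
Qed.

Lemma freed_step s l s' x : step s l s' -> x \in freed s' -> x \in freed s \/
  exists t acc, [/\ rec (th s t) = RScan [::] acc, x \in limbo (th s t) & x \notin acc].
Proof.
case=> {s l s'}; try by move=> *; left.
move=> s t ts acc _ <- hrec; rewrite /= mem_cat mem_filter => /orP [/andP [xA xB]|]; last by left.
by right; exists t, acc.
Qed.

Lemma freed_safe_step s l s' : inv s -> step s l s' -> freed_safe s'.
Proof.
move=> iv st x xF j jN.
have [dx sx] : detached s x /\ safe_from (th s j) (resv s j) x.
  case: (freed_step st xF) => [xF0|[t [acc [hrec xB xA]]]].
    by split; [apply: (freed_detached iv xF0) | apply: (inv_freed iv xF0 jN)].
  split; first exact: (limbo_detached iv xB).
  case: (inv_scan iv hrec xB jN) => [//|[w tr]]; apply: (safe_from_writer w) => k kr e.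
  by case: (tr k kr e); rewrite // (negbTE xA).
exact: (safe_from_step (inv_threads iv j) dx st sx).
Qed.

Lemma signal_safe_step s l s' : inv s -> step s l s' -> signal_safe s'.
Proof.
move=> iv st u rest x; have frame := signal_safe_persist iv st.
case: st iv frame => {s l s'}.
- by move=> s t ts _ <- hrec _ _ frame; case_actor; [rewrite hrec | exact: frame].
- by move=> s t ts _ <- hrec _ _ frame; case_actor; [rewrite hrec | exact: frame].
- by move=> s t ts _ <- hrec _ _ frame; case_actor; [rewrite hrec | exact: frame].
- by move=> s t ts y _ <- hrec _ _ _ frame; case_actor; [rewrite hrec | exact: frame].
- by move=> s t ts k y _ <- hrec _ _ _ _ frame; case_actor; [rewrite hrec | exact: frame].
- by move=> s t ts _ <- hrec _ _ frame; case_actor; [rewrite hrec | exact: frame].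
- by move=> s t ts y _ _ _ _ _ _ frame; exact: frame.
- by move=> s t ts y _ <- hrec _ _ _ frame; case_actor; [rewrite hrec | exact: frame].
- by move=> s t ts y _ <- hrec _ _ _ frame; case_actor; [rewrite hrec | exact: frame].
- by move=> s t ts y _ <- hrec _ _ _ _ frame; case_actor; [rewrite hrec | exact: frame].
- by move=> s t ts y _ <- hrec _ _ _ frame; case_actor; [rewrite hrec | exact: frame].
- by move=> s t ts nx _ <- hrec _ _ frame; case_actor; [rewrite hrec | exact: frame].
- move=> s t ts _ <- _ hpc _ _ frame; case_actor; last exact: frame.
  move=> [<-] _ j jN; rewrite mem_filter mem_iota leq0n jN /= andbT negbK => /eqP ->.
  by rewrite eqxx; apply: idle_or_writing_safe; case: hpc => ->.
- move=> s t ts j0 rest0 _ <- hrec iv frame; case_actor; last first.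
    by case: eqP => _; rewrite ?handler_rec ?handler_limbo; exact: frame.
  move=> [<-] xB j jN jr; case: (eqVneq j j0) => [->|nj]; last first.
    move: (frame _ _ _ hrec xB j jN); rewrite in_cons negb_or nj jr /set_th /upd /= (negbTE nj).
    by apply.
  case: eqP => [->|_] /=; last exact: handler_safe_or_writer (inv_threads iv j0).
  have [_ _ _ iw] := inv_threads iv t.
  by apply: idle_or_writing_safe; apply: iw; rewrite hrec.
- by move=> s t ts _ <- hrec _ frame; case_actor; [done | exact: frame].
- by move=> s t ts j0 k rest0 acc _ <- hrec _ frame; case_actor; [done | exact: frame].
- by move=> s t ts acc _ <- hrec _ frame; case_actor; [done | exact: frame].
Qed.

Lemma scan_safe_step s l s' : inv s -> step s l s' -> scan_safe s'.
Proof.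
move=> iv st u rest acc x; have frame := scan_safe_persist iv st; have sframe := signal_safe_persist iv st.
case: st iv frame sframe => {s l s'}.
- by move=> s t ts _ <- hrec _ _ frame _; case_actor; [rewrite hrec | exact: frame].
- by move=> s t ts _ <- hrec _ _ frame _; case_actor; [rewrite hrec | exact: frame].
- by move=> s t ts _ <- hrec _ _ frame _; case_actor; [rewrite hrec | exact: frame].
- by move=> s t ts y _ <- hrec _ _ _ frame _; case_actor; [rewrite hrec | exact: frame].
- by move=> s t ts k y _ <- hrec _ _ _ _ frame _; case_actor; [rewrite hrec | exact: frame].
- by move=> s t ts _ <- hrec _ _ frame _; case_actor; [rewrite hrec | exact: frame].
- by move=> s t ts y _ _ _ _ _ _ frame _; exact: frame.
- by move=> s t ts y _ <- hrec _ _ _ frame _; case_actor; [rewrite hrec | exact: frame].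
- by move=> s t ts y _ <- hrec _ _ _ frame _; case_actor; [rewrite hrec | exact: frame].
- by move=> s t ts y _ <- hrec _ _ _ _ frame _; case_actor; [rewrite hrec | exact: frame].
- by move=> s t ts y _ <- hrec _ _ _ frame _; case_actor; [rewrite hrec | exact: frame].
- by move=> s t ts nx _ <- hrec _ _ frame _; case_actor; [rewrite hrec | exact: frame].
- by move=> s t ts _ <- _ _ _ _ frame _; case_actor; [done | exact: frame].
- move=> s t ts j0 rest0 _ <- hrec _ frame _; case_actor; first done.
  by case: eqP => _; rewrite ?handler_rec ?handler_limbo; exact: frame.
- move=> s t ts _ <- hrec _ frame sframe; case_actor; last exact: frame.
  move=> [<- <-] xB j jN; case: (sframe _ _ _ hrec xB j jN isT) => [|w]; first by left.
  by right; split=> // k kr _; left; apply: allpairs_f; rewrite mem_iota.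
- move=> s t ts j0 k0 rest0 acc0 _ <- hrec _ frame _; case_actor; last exact: frame.
  move=> [<- <-] xB j jN; case: (frame _ _ _ _ hrec xB j jN) => [|[w tr]]; first by left.
  right; split=> // k kr e; case: (tr k kr e) => [|xA]; last first.
    by right; case: (resv s j0 k0) => // ?; rewrite in_cons xA orbT.
  rewrite in_cons => /orP [/eqP [ej ek]|]; last by left.
  by right; move: e; rewrite /= ej ek => ->; rewrite mem_head.
- by move=> s t ts acc0 _ <- hrec _ frame _; case_actor; [done | exact: frame].
Qed.

Lemma inv_step s l s' : inv s -> step s l s' -> inv s'.
Proof.
move=> iv st; split.
- exact: threads_ok_step (inv_threads iv) st.
- case: (heap_of_step st) => [e|[h hs e]]; apply: (heap_ok_eq e); first exact: (inv_heap iv).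
  exact: heap_ok_step (inv_heap iv) hs.
- exact: freed_safe_step iv st.
- exact: signal_safe_step iv st.
- exact: scan_safe_step iv st.
Qed.

Lemma inv_init init : inv (init_state init).
Proof.
have nothing_retired x : ~ retired (heap_of (init_state init)) x by case=> [[]|[]|].
split=> //.
by constructor=> //= x /nothing_retired.
Qed.

Lemma inv_reachable init s : reachable N r threshold init s -> inv s.
Proof. by elim=> [|s0 l s1 _ iv st]; [apply: inv_init | apply: inv_step iv st]. Qed.

Lemma access_step s t x s' : step s (Access t x) s' -> t < N /\
  [\/ pc (th s t) = Reading /\ x \in vis (th s t),
      pc (th s t) = Writing /\ reserved_by s r t x,
      x \in own (th s t) | x \in linked s].
Proof.
move E: (Access t x) => l st; case: st E => // {l s'} {}s t' ts.
- by move=> y tN <- _ hpc yV [-> ->]; split=> //; constructor 1.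
- by move=> y tN <- _ hpc [yR|yO] [-> ->]; split=> //; [constructor 2 | constructor 3].
- by move=> y tN <- _ _ yO [-> ->]; split=> //; constructor 3.
- by move=> y tN <- _ _ yL _ [-> ->]; split=> //; constructor 4.
Qed.

End Invariant.

Theorem lemma6 (N r threshold : nat) (init_nodes : seq node) (s s' : state)
  (t : thread) (x : node) :
  reachable N r threshold init_nodes s ->
  step N r threshold s (Access t x) s' ->
  x \notin freed s.
Proof.
move=> /inv_reachable iv /access_step [tN acc]; apply/negP => xF.
have [xL xO] := freed_detached iv xF.
have [xV _ xW] := inv_freed iv xF tN.
case: acc => [[hpc xv]|[hpc [k kr e]]|xo|xl].
- by move: (xV hpc); rewrite xv.
- by apply: (xW _ k kr e); rewrite hpc.
- by move: (xO t); rewrite xo.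
- by move: xL; rewrite xl.
Qed.
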